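(* Let $A$ and $H$ be Hopf algebras and let $(A,H,\triangleleft,\triangleright)$ and $(A,H,\triangleleft',\triangleright')$ be two matched pairs of Hopf algebras. Then there is an isomorphism $A\bowtie H\cong A\bowtie' H$ which is simultaneously a Hopf algebra isomorphism, a left $A$-module map and a right $H$-comodule map if and only if $\triangleleft'=\triangleleft$ and there exists a coalgebra lazy $1$-cocycle $u\in H^1_{l,c}(H,A)$ such that for all $h,g\in H$, $c\in A$: $h\triangleright' c=u(h_{(1)})(h_{(2)}\triangleright c_{(1)})S_A\bigl(u(h_{(3)}\triangleleft c_{(2)})\bigr)$, $u(h_{(1)})(h_{(2)}\triangleright u(g_{(1)}))S_A\bigl(u(h_{(3)}g_{(2)})\bigr)=\varepsilon_H(g)\varepsilon_H(h)1_A$, $h\triangleleft u(g)=\varepsilon_H(g)\,h$.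
   Context: $k$ is a field; Sweedler notation. A matched pair of Hopf algebras is a system $(A,H,\triangleleft,\triangleright)$ with $A,H$ Hopf algebras, $\triangleleft:H\otimes A\to H$, $\triangleright:H\otimes A\to A$ coalgebra maps making $A$ a left $H$-module and $H$ a right $A$-module, such that $1_H\triangleleft a=\varepsilon_A(a)1_H$, $h\triangleright 1_A=\varepsilon_H(h)1_A$, $g\triangleright(ab)=(g_{(1)}\triangleright a_{(1)})((g_{(2)}\triangleleft a_{(2)})\triangleright b)$, $(gh)\triangleleft a=(g\triangleleft(h_{(1)}\triangleright a_{(1)}))(h_{(2)}\triangleleft a_{(2)})$, $g_{(1)}\triangleleft a_{(1)}\otimes g_{(2)}\triangleright a_{(2)}=g_{(2)}\triangleleft a_{(2)}\otimes g_{(1)}\triangleright a_{(1)}$. The bicrossed product $A\bowtie H$ is $A\otimes H$ with multiplication $(a\bowtie h)(c\bowtie g)=a(h_{(1)}\triangleright c_{(1)})\bowtie(h_{(2)}\triangleleft c_{(2)})g$, unit $1_A\bowtie 1_H$, tensor product coalgebra structure; $A\bowtie' H$ is defined likewise with $\triangleleft',\triangleright'$. Both are left $A$-modules via $b\cdot(a\bowtie h)=ba\bowtie h$ and right $H$-comodules via $a\bowtie h\mapsto a\bowtie h_{(1)}\otimes h_{(2)}$. A coalgebra lazy $1$-cocycle is a coalgebra map $u:H\to A$ with $u(1_H)=1_A$ and $h_{(1)}\otimes u(h_{(2)})=h_{(2)}\otimes u(h_{(1)})$ for all $h\in H$; $H^1_{l,c}(H,A)$ is the set of these. *)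

(* Hopf algebras over a field K, with Sweedler notation encoded
   by formal tensors: an element of V (x) W is represented by a finite list
   [:: (v_1,w_1); ...] (meaning sum_i v_i (x) w_i), and two such representatives
   are compared through the universal property of the tensor product, i.e. by
   applying every multilinear map into every K-vector space U. *)
From HB Require Import structures.
From mathcomp Require Import all_boot all_order all_algebra.
Set Implicit Arguments. Unset Strict Implicit. Unset Printing Implicit Defensive.
Import GRing.Theory.
Local Open Scope ring_scope.

Definition sw {V W : Type} {U : nmodType} (t : seq (V * W)) (f : V -> W -> U) : U :=
  \sum_(p <- t) f p.1 p.2.

Section Defs.
Variable K : fieldType.

Definition lin1 {V U : lmodType K} (f : V -> U) : Prop :=
  forall (a : K) (x y : V), f (a *: x + y) = a *: f x + f y.

Definition lin2 {V1 V2 U : lmodType K} (f : V1 -> V2 -> U) : Prop :=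
  (forall y, lin1 (fun x => f x y)) /\ (forall x, lin1 (f x)).

Definition lin3 {V1 V2 V3 U : lmodType K} (f : V1 -> V2 -> V3 -> U) : Prop :=
  [/\ forall y z, lin1 (fun x => f x y z),
      forall x z, lin1 (fun y => f x y z) &
      forall x y, lin1 (f x y)].

Definition lin4 {V1 V2 V3 V4 U : lmodType K} (f : V1 -> V2 -> V3 -> V4 -> U) : Prop :=
  [/\ forall y z w, lin1 (fun x => f x y z w),
      forall x z w, lin1 (fun y => f x y z w),
      forall x y w, lin1 (fun z => f x y z w) &
      forall x y z, lin1 (f x y z)].

Record hopf_str (H : algType K) := HopfStr {
  cop : H -> seq (H * H);
  cou : H -> K;
  antip : H -> H }.

Definition is_hopf (H : algType K) (s : hopf_str H) : Prop :=
  let D := cop s in let e := cou s in let S := antip s in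
  (forall (a : K) (x y : H), e (a *: x + y) = a * e x + e y) /\
  lin1 S /\
  (forall (U : lmodType K) (f : H -> H -> U), lin2 f -> lin1 (fun x => sw (D x) f)) /\
  (forall (U : lmodType K) (f : H -> H -> H -> U), lin3 f -> forall x,
     sw (D x) (fun x1 x2 => sw (D x1) (fun y1 y2 => f y1 y2 x2))
     = sw (D x) (fun x1 x2 => sw (D x2) (fun y1 y2 => f x1 y1 y2))) /\
  (forall x, sw (D x) (fun a b => e a *: b) = x /\ sw (D x) (fun a b => e b *: a) = x) /\
  (forall (U : lmodType K) (f : H -> H -> U), lin2 f ->
     (forall x y, sw (D (x * y)) f
        = sw (D x) (fun x1 x2 => sw (D y) (fun y1 y2 => f (x1 * y1) (x2 * y2))))
     /\ sw (D 1) f = f 1 1) /\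
  (forall x y, e (x * y) = e x * e y) /\ e 1 = 1 /\
  (forall x, sw (D x) (fun a b => S a * b) = e x *: 1
          /\ sw (D x) (fun a b => a * S b) = e x *: 1).

Section MatchedPair.
Variables (A H : algType K) (sA : hopf_str A) (sH : hopf_str H).
Local Notation DA := (cop sA).
Local Notation DH := (cop sH).
Local Notation eA := (cou sA).
Local Notation eH := (cou sH).

Definition matched_pair (lt : H -> A -> H) (rt : H -> A -> A) : Prop :=
  lin2 lt /\ lin2 rt /\
  (forall (U : lmodType K) (f : H -> H -> U), lin2 f -> forall h a,
     sw (DH (lt h a)) f
     = sw (DH h) (fun h1 h2 => sw (DA a) (fun a1 a2 => f (lt h1 a1) (lt h2 a2)))) /\
  (forall h a, eH (lt h a) = eH h * eA a) /\
  (forall (U : lmodType K) (f : A -> A -> U), lin2 f -> forall h a,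
     sw (DA (rt h a)) f
     = sw (DH h) (fun h1 h2 => sw (DA a) (fun a1 a2 => f (rt h1 a1) (rt h2 a2)))) /\
  (forall h a, eA (rt h a) = eH h * eA a) /\
  (forall a, rt 1 a = a) /\ (forall g h a, rt (g * h) a = rt g (rt h a)) /\
  (forall h, lt h 1 = h) /\ (forall h a b, lt h (a * b) = lt (lt h a) b) /\
  (forall a, lt 1 a = eA a *: 1) /\ (forall h, rt h 1 = eH h *: 1) /\
  (forall g a b, rt g (a * b)
     = sw (DH g) (fun g1 g2 => sw (DA a) (fun a1 a2 => rt g1 a1 * rt (lt g2 a2) b))) /\
  (forall g h a, lt (g * h) a
     = sw (DH h) (fun h1 h2 => sw (DA a) (fun a1 a2 => lt g (rt h1 a1) * lt h2 a2))) /\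
  (forall (U : lmodType K) (f : H -> A -> U), lin2 f -> forall g a,
     sw (DH g) (fun g1 g2 => sw (DA a) (fun a1 a2 => f (lt g1 a1) (rt g2 a2)))
     = sw (DH g) (fun g1 g2 => sw (DA a) (fun a1 a2 => f (lt g2 a2) (rt g1 a1)))).

(* A linear map A (x) H -> A (x) H, given by the (formal tensor) images of the
   pure tensors a (x) h, bilinear in (a, h). *)
Definition tensor_map (psi : A -> H -> seq (A * H)) : Prop :=
  forall (U : lmodType K) (f : A -> H -> U), lin2 f -> lin2 (fun a h => sw (psi a h) f).

(* There is a linear isomorphism psi : A >< H -> A >< ' H (bicrossed products
   built on (lt, rt) and (lt', rt') resp.) which is a Hopf algebra map
   (i.e. a bialgebra map: unital algebra map + counital coalgebra map; it then
   automatically commutes with the antipodes), a left A-module map and a right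
   H-comodule map. *)
Definition bicrossed_iso (lt : H -> A -> H) (rt : H -> A -> A)
    (lt' : H -> A -> H) (rt' : H -> A -> A) : Prop :=
  exists psi : A -> H -> seq (A * H),
    tensor_map psi /\
    (exists phi : A -> H -> seq (A * H), tensor_map phi /\
       forall (U : lmodType K) (f : A -> H -> U), lin2 f -> forall a h,
         sw (psi a h) (fun x y => sw (phi x y) f) = f a h /\
         sw (phi a h) (fun x y => sw (psi x y) f) = f a h) /\
    (* algebra map: unit and multiplication
       (a >< h)(c >< g) = a (h1 |> c1) >< (h2 <| c2) g *)
    (forall (U : lmodType K) (f : A -> H -> U), lin2 f ->
       sw (psi 1 1) f = f 1 1 /\
       forall a h c g,
         sw (DH h) (fun h1 h2 => sw (DA c) (fun c1 c2 =>
             sw (psi (a * rt h1 c1) (lt h2 c2 * g)) f))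
         = sw (psi a h) (fun x y => sw (psi c g) (fun x' y' =>
             sw (DH y) (fun y1 y2 => sw (DA x') (fun x1' x2' =>
               f (x * rt' y1 x1') (lt' y2 x2' * y')))))) /\
    (forall (U : lmodType K) (f : A -> H -> A -> H -> U), lin4 f -> forall a h,
       sw (psi a h) (fun x y => sw (DA x) (fun x1 x2 => sw (DH y) (fun y1 y2 =>
          f x1 y1 x2 y2)))
       = sw (DA a) (fun a1 a2 => sw (DH h) (fun h1 h2 =>
          sw (psi a1 h1) (fun x y => sw (psi a2 h2) (fun x' y' => f x y x' y'))))) /\
    (forall a h, sw (psi a h) (fun x y => eA x * eH y) = eA a * eH h) /\
    (forall (U : lmodType K) (f : A -> H -> U), lin2 f -> forall b a h,
       sw (psi (b * a) h) f = sw (psi a h) (fun x y => f (b * x) y)) /\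
    (* right H-comodule map: a >< h |-> (a >< h1) (x) h2 *)
    (forall (U : lmodType K) (f : A -> H -> H -> U), lin3 f -> forall a h,
       sw (psi a h) (fun x y => sw (DH y) (fun y1 y2 => f x y1 y2))
       = sw (DH h) (fun h1 h2 => sw (psi a h1) (fun x y => f x y h2))).

Definition coalg_lazy_cocycle (u : H -> A) : Prop :=
  lin1 u /\
  (forall (U : lmodType K) (f : A -> A -> U), lin2 f -> forall h,
     sw (DA (u h)) f = sw (DH h) (fun h1 h2 => f (u h1) (u h2))) /\
  (forall h, eA (u h) = eH h) /\
  u 1 = 1 /\
  (forall (U : lmodType K) (f : H -> A -> U), lin2 f -> forall h,
     sw (DH h) (fun h1 h2 => f h1 (u h2)) = sw (DH h) (fun h1 h2 => f h2 (u h1))).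

End MatchedPair.
End Defs.

(* Inverting the given isomorphism if necessary, let
   psi : A ><' H -> A >< H be a Hopf algebra isomorphism which is left
   A-linear and right H-colinear, and put u(h) := (id (x) eps) psi(1 >< h).
   Linearity and colinearity force psi(a >< h) = a u(h1) >< h2, and since
   psi is a counital coalgebra map, u is a coalgebra lazy 1-cocycle.  Testing
   multiplicativity of psi on (1 >< h)(c >< g) against eps (x) id and against
   x (x) y |-> x S(u(y)) yields <|' = <|, the formula for |>', the cocycle
   condition and h <| u(g) = eps(g) h.
   Conversely, given such a u, the map a >< h |-> a u(h1) >< h2 has inverse
   a >< h |-> a S(u(h1)) >< h2 and is a coalgebra, module and comodule map
   because u is a lazy coalgebra map; the three conditions make it
   multiplicative, both sides reducing to a u(h1) (h2 |> c1) (k1 |> u(g1)) >< k2 g2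
   with k = h3 <| c2. *)

From Stdlib Require Import FunctionalExtensionality.
From HB Require Import structures.
From mathcomp Require Import all_boot all_order all_algebra ring.
Import GRing.Theory.
Local Open Scope ring_scope.
Set Implicit Arguments. Unset Strict Implicit. Unset Printing Implicit Defensive.

Section SweedlerSums.
Variables (V W V' W' : Type).

Lemma eq_sw {U : nmodType} (t : seq (V * W)) (f g : V -> W -> U) :
  (forall x y, f x y = g x y) -> sw t f = sw t g.
Proof. by move=> fg; apply: eq_bigr => p _; rewrite fg. Qed.

Lemma sw_split {U : nmodType} (t : seq (V * W)) (f g : V -> W -> U) :
  sw t (fun x y => f x y + g x y) = sw t f + sw t g.
Proof. exact: big_split. Qed.

Lemma exchange_sw {U : nmodType} (t : seq (V * W)) (t' : seq (V' * W'))
    (F : V -> W -> V' -> W' -> U) :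
  sw t (fun x y => sw t' (F x y)) = sw t' (fun x' y' => sw t (fun x y => F x y x' y')).
Proof. exact: exchange_big. Qed.

Lemma sw_map {U : nmodType} (t : seq (V * W)) (g : V * W -> V' * W') (f : V' -> W' -> U) :
  sw (map g t) f = sw t (fun x y => f (g (x, y)).1 (g (x, y)).2).
Proof. by rewrite /sw big_map; apply: eq_bigr => -[]. Qed.

Lemma mulr_swl {R : pzSemiRingType} (t : seq (V * W)) (f : V -> W -> R) c :
  sw t f * c = sw t (fun x y => f x y * c).
Proof. exact: mulr_suml. Qed.

Lemma mulr_swr {R : pzSemiRingType} (t : seq (V * W)) (f : V -> W -> R) c :
  c * sw t f = sw t (fun x y => c * f x y).
Proof. exact: mulr_sumr. Qed.

Variable K : fieldType.

Lemma scaler_swr {U : lmodType K} (t : seq (V * W)) (f : V -> W -> U) a :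
  a *: sw t f = sw t (fun x y => a *: f x y).
Proof. exact: scaler_sumr. Qed.

Lemma scaler_swl {U : lmodType K} (t : seq (V * W)) (k : V -> W -> K) (v : U) :
  sw t k *: v = sw t (fun x y => k x y *: v).
Proof. exact: scaler_suml. Qed.

End SweedlerSums.

Section Linearity.
Variable K : fieldType.

(* [lin1] only covers maps into a [lmodType]; [K] itself is not one, so
   scalar-valued maps get their own predicate. *)
Definition lin_form {V : lmodType K} (k : V -> K) :=
  forall a x y, k (a *: x + y) = a * k x + k y.

Section Elementary.
Variables (V U : lmodType K).

Lemma lin1D (f : V -> U) : lin1 f -> forall x y, f (x + y) = f x + f y.
Proof. by move=> lf x y; have := lf 1 x y; rewrite !scale1r. Qed.

Lemma lin10 (f : V -> U) : lin1 f -> f 0 = 0.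
Proof. by move=> lf; apply: (addrI (f 0)); rewrite -lin1D // !addr0. Qed.

Lemma lin1Z (f : V -> U) : lin1 f -> forall a x, f (a *: x) = a *: f x.
Proof. by move=> lf a x; have := lf a x 0; rewrite !addr0 lin10 // addr0. Qed.

Lemma lin_formD (k : V -> K) : lin_form k -> forall x y, k (x + y) = k x + k y.
Proof. by move=> lk x y; have := lk 1 x y; rewrite scale1r mul1r. Qed.

Lemma lin_form0 (k : V -> K) : lin_form k -> k 0 = 0.
Proof. by move=> lk; apply: (addrI (k 0)); rewrite -lin_formD // !addr0. Qed.

Lemma lin_formZ (k : V -> K) : lin_form k -> forall a x, k (a *: x) = a * k x.
Proof. by move=> lk a x; have := lk a x 0; rewrite !addr0 lin_form0 // addr0. Qed.

End Elementary.

Lemma sw_lin1 {P Q : Type} {X U : lmodType K} (t : seq (P * Q)) (f : P -> Q -> X)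
    (L : X -> U) :
  lin1 L -> L (sw t f) = sw t (fun x y => L (f x y)).
Proof.
move=> lL; rewrite /sw; elim: t => [|p t IH]; first by rewrite !big_nil lin10.
by rewrite !big_cons lin1D // IH.
Qed.

Lemma sw_lin_form {P Q : Type} {V : lmodType K} (t : seq (P * Q)) (f : P -> Q -> V) (k : V -> K) :
  lin_form k -> k (sw t f) = sw t (fun x y => k (f x y)).
Proof.
move=> lk; rewrite /sw; elim: t => [|p t IH]; first by rewrite !big_nil lin_form0.
by rewrite !big_cons lin_formD // IH.
Qed.

Lemma lin1_id {V : lmodType K} : lin1 (fun x : V => x).
Proof. by []. Qed.

Lemma lin1_comp {V X U : lmodType K} (L : X -> U) (g : V -> X) :
  lin1 L -> lin1 g -> lin1 (fun x => L (g x)).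
Proof. by move=> lL lg a x y; rewrite lg lL. Qed.

Lemma lin1_sw {V U : lmodType K} {P Q : Type} (t : seq (P * Q)) (F : V -> P -> Q -> U) :
  (forall p q, lin1 (fun x => F x p q)) -> lin1 (fun x => sw t (F x)).
Proof.
move=> lF a x y; rewrite scaler_swr -sw_split; apply: eq_sw => p q; exact: lF.
Qed.

Lemma lin1_mull {B : lalgType K} (c : B) : lin1 (fun z : B => z * c).
Proof. by move=> a x y; rewrite mulrDl scalerAl. Qed.

Lemma lin1_mulr {B : algType K} (c : B) : lin1 (fun z : B => c * z).
Proof. by move=> a x y; rewrite mulrDr scalerAr. Qed.

Lemma lin1_scale {U : lmodType K} (k : K) : lin1 (fun z : U => k *: z).
Proof. by move=> a x y; rewrite scalerDr !scalerA mulrC. Qed.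

Lemma lin1_scalel {V U : lmodType K} (k : V -> K) (v : U) :
  lin_form k -> lin1 (fun x => k x *: v).
Proof. by move=> lk a x y; rewrite lk scalerDl scalerA. Qed.

Lemma lin_form_comp {V X : lmodType K} (k : X -> K) (g : V -> X) :
  lin_form k -> lin1 g -> lin_form (fun x => k (g x)).
Proof. by move=> lk lg a x y; rewrite lg lk. Qed.

Lemma lin_form_mull {V : lmodType K} (k : V -> K) c :
  lin_form k -> lin_form (fun x => k x * c).
Proof. by move=> lk a x y; rewrite lk mulrDl mulrA. Qed.

Lemma lin_form_mulr {V : lmodType K} (k : V -> K) c :
  lin_form k -> lin_form (fun x => c * k x).
Proof. by move=> lk a x y; rewrite lk mulrDr mulrCA. Qed.

Lemma lin_form_sw {V : lmodType K} {P Q : Type} (t : seq (P * Q)) (F : V -> P -> Q -> K) :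
  (forall p q, lin_form (fun x => F x p q)) -> lin_form (fun x => sw t (F x)).
Proof.
move=> lF a x y; rewrite /sw mulr_sumr -big_split; apply: eq_bigr => p _; exact: lF.
Qed.

Lemma lin1_cop {H : algType K} (s : hopf_str H) {V U : lmodType K} (g : V -> H)
    (F : H -> H -> U) :
  is_hopf s -> lin1 g -> lin2 F -> lin1 (fun x => sw (cop s (g x)) F).
Proof.
move=> [_ [_ [lD _]]] lg lF.
exact: (lin1_comp (L := fun z => sw (cop s z) F)) (lD _ _ lF) lg.
Qed.

Lemma lin1_tensor_mapl {A H : algType K} (psi : A -> H -> seq (A * H)) {V U : lmodType K}
    (g : V -> A) c (F : A -> H -> U) :
  tensor_map psi -> lin1 g -> lin2 F -> lin1 (fun x => sw (psi (g x) c) F).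
Proof.
move=> lpsi lg lF.
exact: (lin1_comp (L := fun z => sw (psi z c) F)) ((lpsi _ _ lF).1 c) lg.
Qed.

Lemma lin1_tensor_mapr {A H : algType K} (psi : A -> H -> seq (A * H)) {V U : lmodType K}
    (g : V -> H) c (F : A -> H -> U) :
  tensor_map psi -> lin1 g -> lin2 F -> lin1 (fun x => sw (psi c (g x)) F).
Proof.
move=> lpsi lg lF.
exact: (lin1_comp (L := fun z => sw (psi c z) F)) ((lpsi _ _ lF).2 c) lg.
Qed.

Lemma cou_lin_form {H : algType K} (s : hopf_str H) : is_hopf s -> lin_form (cou s).
Proof. by case. Qed.

End Linearity.

(* Discharges the linearity side conditions of the Sweedler calculus by
   decomposing the map syntactically. *)
Ltac lin_atom :=
  first [ assumption
        | exact: lin1_mull | exact: lin1_mulr | exact: lin1_scale | exact: lin1_id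
        | match goal with
          | l : lin2 _ |- _ => first [exact: l.1 | exact: l.2]
          | l : lin3 _ |- _ => destruct l as [? ? ?]; lin_atom
          | l : lin4 _ |- _ => destruct l as [? ? ? ?]; lin_atom
          | l : forall _, lin1 _ |- _ => exact: l
          | l : forall _ _, lin1 _ |- _ => exact: l
          | l : forall _ _ _, lin1 _ |- _ => exact: l
          end ].

Ltac lin_tac :=
  cbv beta;
  lazymatch goal with
  | |- lin2 _ => split => ?; lin_tac
  | |- lin3 _ => split => ? ?; lin_tac
  | |- lin4 _ => split => ? ? ?; lin_tac
  | |- lin_form _ => lin_form_tac
  | |- lin1 _ => lin1_tac
  end
with lin_form_tac :=
  cbv beta;
  match goal with
  | |- lin_form (fun x => sw ?t (@?F x)) => apply: (lin_form_sw t (F := F)) => ? ?; lin_form_tac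
  | |- lin_form (fun x => cou ?s (@?g x)) =>
       apply: (lin_form_comp (k := cou s) (g := g)); [exact: cou_lin_form | lin_tac]
  | |- lin_form (fun x => @?k x * ?c) => apply: (lin_form_mull (k := k)); lin_form_tac
  | |- lin_form (fun x => ?c * @?k x) => apply: (lin_form_mulr (k := k)); lin_form_tac
  end
with lin1_tac :=
  cbv beta;
  match goal with
  | |- lin1 (fun x => x) => exact: lin1_id
  | |- lin1 (fun x => sw (cop ?s (@?g x)) ?F) =>
       apply: (lin1_cop (s := s) (g := g) (F := F)); [assumption | lin_tac | lin_tac]
  | |- lin1 (fun x => sw (?psi (@?g x) ?c) ?F) =>
       apply: (lin1_tensor_mapl (psi := psi) (g := g) (F := F) c);
         [assumption | lin_tac | lin_tac]
  | |- lin1 (fun x => sw (?psi ?c (@?g x)) ?F) =>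
       apply: (lin1_tensor_mapr (psi := psi) (g := g) (F := F) c);
         [assumption | lin_tac | lin_tac]
  | |- lin1 (fun x => sw ?t (@?F x)) => apply: (lin1_sw t (F := F)) => ? ?; lin_tac
  | |- lin1 (fun x => GRing.scale (@?k x) ?v) => apply: (lin1_scalel (k := k)); lin_form_tac
  | |- lin1 (fun x => ?L (@?g x)) => apply: (lin1_comp (L := L) (g := g)); [lin_atom | lin_tac]
  | |- lin1 (fun x => ?L (@?g x) ?c) =>
       apply: (lin1_comp (L := fun z => L z c) (g := g)); [lin_atom | lin_tac]
  | |- lin1 (fun x => ?L (@?g x) ?c ?d) =>
       apply: (lin1_comp (L := fun z => L z c d) (g := g)); [lin_atom | lin_tac]
  | |- lin1 (fun x => ?L (@?g x) ?c ?d ?e) =>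
       apply: (lin1_comp (L := fun z => L z c d e) (g := g)); [lin_atom | lin_tac]
  | |- lin1 ?f => lin_atom
  end.

Ltac scale_ring := rewrite ?scalerA; congr (_ *: _); ring.

Section HopfAlgebra.
Variables (K : fieldType) (H : algType K) (s : hopf_str H).
Hypothesis hs : is_hopf s.
Local Notation D := (cop s).
Local Notation e := (cou s).
Local Notation S := (antip s).

Lemma antip_lin : lin1 S.
Proof. by case: hs => _ []. Qed.

Lemma coassoc (U : lmodType K) (f : H -> H -> H -> U) : lin3 f -> forall x,
  sw (D x) (fun x1 x2 => sw (D x1) (fun y1 y2 => f y1 y2 x2))
  = sw (D x) (fun x1 x2 => sw (D x2) (fun y1 y2 => f x1 y1 y2)).
Proof. by case: hs => _ [_ [_ [coass _]]]; apply: coass. Qed.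

Lemma counit x : sw (D x) (fun a b => e a *: b) = x /\ sw (D x) (fun a b => e b *: a) = x.
Proof. by case: hs => _ [_ [_ [_ [cou _]]]]. Qed.

Lemma copM (U : lmodType K) (f : H -> H -> U) : lin2 f -> forall x y,
  sw (D (x * y)) f
  = sw (D x) (fun x1 x2 => sw (D y) (fun y1 y2 => f (x1 * y1) (x2 * y2))).
Proof. by case: hs => _ [_ [_ [_ [_ [copm _]]]]] lf; case: (copm _ _ lf). Qed.

Lemma cop1 (U : lmodType K) (f : H -> H -> U) : lin2 f -> sw (D 1) f = f 1 1.
Proof. by case: hs => _ [_ [_ [_ [_ [copm _]]]]] lf; case: (copm _ _ lf). Qed.

Lemma couM x y : e (x * y) = e x * e y.
Proof. by case: hs => _ [_ [_ [_ [_ [_ [coum _]]]]]]. Qed.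

Lemma cou1 : e 1 = 1.
Proof. by case: hs => _ [_ [_ [_ [_ [_ [_ [cou1 _]]]]]]]. Qed.

Lemma antipode x :
  sw (D x) (fun a b => S a * b) = e x *: 1 /\ sw (D x) (fun a b => a * S b) = e x *: 1.
Proof. by case: hs => _ [_ [_ [_ [_ [_ [_ [_ ant]]]]]]]. Qed.

Lemma counitl (U : lmodType K) (L : H -> U) (F : H -> H -> U) x :
  lin1 L -> (forall a b, F a b = e a *: L b) -> sw (D x) F = L x.
Proof.
move=> lL FE; rewrite -{2}(counit x).1 sw_lin1 //.
by apply: eq_sw => a b; rewrite FE lin1Z.
Qed.

Lemma counitr (U : lmodType K) (L : H -> U) (F : H -> H -> U) x :
  lin1 L -> (forall a b, F a b = e b *: L a) -> sw (D x) F = L x.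
Proof.
move=> lL FE; rewrite -{2}(counit x).2 sw_lin1 //.
by apply: eq_sw => a b; rewrite FE lin1Z.
Qed.

Lemma counitlE (U : lmodType K) (L : H -> U) x :
  lin1 L -> sw (D x) (fun a b => e a *: L b) = L x.
Proof. by move=> lL; apply: counitl. Qed.

Lemma counitrE (U : lmodType K) (L : H -> U) x :
  lin1 L -> sw (D x) (fun a b => e b *: L a) = L x.
Proof. by move=> lL; apply: counitr. Qed.

Lemma counitl_form (k : H -> K) x : lin_form k -> sw (D x) (fun a b => e a * k b) = k x.
Proof.
move=> lk; rewrite -{2}(counit x).1 sw_lin_form //.
by apply: eq_sw => a b; rewrite lin_formZ.
Qed.

Lemma cou_cop x : sw (D x) (fun a b => e a * e b) = e x.
Proof. by apply: counitl_form; case: hs. Qed.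

Lemma coassoc4 (U : lmodType K) (B : H -> H -> H -> H -> U) : lin4 B -> forall x,
  sw (D x) (fun x1 r => sw (D r) (fun x2 r' => sw (D r') (fun x3 x4 => B x1 x2 x3 x4)))
  = sw (D x) (fun p x4 => sw (D p) (fun x1 q => sw (D q) (fun x2 x3 => B x1 x2 x3 x4))).
Proof.
move=> lB x.
transitivity (sw (D x) (fun x1 r => sw (D r) (fun q x4 =>
                sw (D q) (fun x2 x3 => B x1 x2 x3 x4)))).
  by apply: eq_sw => x1 r; rewrite (coassoc (f := fun x2 x3 x4 => B x1 x2 x3 x4)) //; lin_tac.
by rewrite (coassoc (f := fun x1 q x4 => sw (D q) (fun x2 x3 => B x1 x2 x3 x4))) //; lin_tac.
Qed.

End HopfAlgebra.

Section MatchedPair.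
Variables (K : fieldType) (A H : algType K) (sA : hopf_str A) (sH : hopf_str H).
Variables (lt : H -> A -> H) (rt : H -> A -> A).
Hypothesis mp : matched_pair sA sH lt rt.
Local Notation DA := (cop sA).
Local Notation DH := (cop sH).
Local Notation eA := (cou sA).
Local Notation eH := (cou sH).

Lemma mp_lt_lin : lin2 lt. Proof. by case: mp. Qed.
Lemma mp_rt_lin : lin2 rt. Proof. by case: mp => _ []. Qed.

Lemma mp_cop_lt (U : lmodType K) (f : H -> H -> U) : lin2 f -> forall h a,
  sw (DH (lt h a)) f
  = sw (DH h) (fun h1 h2 => sw (DA a) (fun a1 a2 => f (lt h1 a1) (lt h2 a2))).
Proof. by case: mp => _ [_ [copl _]]; apply: copl. Qed.

Lemma mp_cou_lt h a : eH (lt h a) = eH h * eA a.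
Proof. by case: mp => _ [_ [_ [coul _]]]. Qed.

Lemma mp_cou_rt h a : eA (rt h a) = eH h * eA a.
Proof. by case: mp => _ [_ [_ [_ [_ [cour _]]]]]. Qed.

Lemma mp_lt1 h : lt h 1 = h.
Proof. by case: mp => _ [_ [_ [_ [_ [_ [_ [_ [lt1 _]]]]]]]]. Qed.

Lemma mp_ltM h a b : lt h (a * b) = lt (lt h a) b.
Proof. by case: mp => _ [_ [_ [_ [_ [_ [_ [_ [_ [ltm _]]]]]]]]]. Qed.

Lemma mp_rt1 h : rt h 1 = eH h *: 1.
Proof. by case: mp => _ [_ [_ [_ [_ [_ [_ [_ [_ [_ [_ [rt1 _]]]]]]]]]]]. Qed.

Lemma mp_rtM g a b : rt g (a * b)
  = sw (DH g) (fun g1 g2 => sw (DA a) (fun a1 a2 => rt g1 a1 * rt (lt g2 a2) b)).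
Proof. by case: mp => _ [_ [_ [_ [_ [_ [_ [_ [_ [_ [_ [_ [rtm _]]]]]]]]]]]]. Qed.

End MatchedPair.

Section CoalgebraMap.
Variables (K : fieldType) (A H : algType K) (sA : hopf_str A) (sH : hopf_str H).
Hypothesis hA : is_hopf sA.
Variable u : H -> A.
Hypotheses
  (u_cop : forall (U : lmodType K) (f : A -> A -> U), lin2 f -> forall h,
     sw (cop sA (u h)) f = sw (cop sH h) (fun h1 h2 => f (u h1) (u h2)))
  (u_cou : forall h, cou sA (u h) = cou sH h).

Lemma coalg_map_antip k :
  sw (cop sH k) (fun k1 k2 => u k1 * antip sA (u k2)) = cou sH k *: 1 /\
  sw (cop sH k) (fun k1 k2 => antip sA (u k1) * u k2) = cou sH k *: 1.
Proof.
have SA_lin := antip_lin hA.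
rewrite -(u_cop (f := fun x y => x * antip sA y)); last by lin_tac.
rewrite -(u_cop (f := fun x y => antip sA x * y)); last by lin_tac.
by rewrite (antipode hA _).1 (antipode hA _).2 u_cou.
Qed.

End CoalgebraMap.

(** * The inverse of a bicrossed isomorphism *)

Section InverseIso.
Variables (K : fieldType) (A H : algType K) (sA : hopf_str A) (sH : hopf_str H).
Hypotheses (hA : is_hopf sA) (hH : is_hopf sH).
Local Notation DA := (cop sA).
Local Notation DH := (cop sH).
Local Notation eA := (cou sA).
Local Notation eH := (cou sH).
Variables (lt lt' : H -> A -> H) (rt rt' : H -> A -> A).
Hypotheses (lt'_lin : lin2 lt') (rt'_lin : lin2 rt').
Variables (psi phi : A -> H -> seq (A * H)).
Hypothesis phi_tensor : tensor_map phi.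
Hypothesis psi_phi_inv : forall (U : lmodType K) (f : A -> H -> U), lin2 f -> forall a h,
  sw (psi a h) (fun x y => sw (phi x y) f) = f a h /\
  sw (phi a h) (fun x y => sw (psi x y) f) = f a h.
Hypothesis psi_unit : forall (U : lmodType K) (f : A -> H -> U), lin2 f ->
  sw (psi 1 1) f = f 1 1.
Hypothesis psi_mul : forall (U : lmodType K) (f : A -> H -> U), lin2 f -> forall a h c g,
  sw (DH h) (fun h1 h2 => sw (DA c) (fun c1 c2 =>
    sw (psi (a * rt h1 c1) (lt h2 c2 * g)) f))
  = sw (psi a h) (fun x y => sw (psi c g) (fun x' y' =>
      sw (DH y) (fun y1 y2 => sw (DA x') (fun x1' x2' =>
        f (x * rt' y1 x1') (lt' y2 x2' * y'))))).
Hypothesis psi_coalg : forall (U : lmodType K) (f : A -> H -> A -> H -> U), lin4 f ->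
  forall a h,
  sw (psi a h) (fun x y => sw (DA x) (fun x1 x2 => sw (DH y) (fun y1 y2 => f x1 y1 x2 y2)))
  = sw (DA a) (fun a1 a2 => sw (DH h) (fun h1 h2 =>
      sw (psi a1 h1) (fun x y => sw (psi a2 h2) (fun x' y' => f x y x' y')))).
Hypothesis psi_cou : forall a h, sw (psi a h) (fun x y => eA x * eH y) = eA a * eH h.
Hypothesis psi_lmod : forall (U : lmodType K) (f : A -> H -> U), lin2 f -> forall b a h,
  sw (psi (b * a) h) f = sw (psi a h) (fun x y => f (b * x) y).
Hypothesis psi_comod : forall (U : lmodType K) (f : A -> H -> H -> U), lin3 f -> forall a h,
  sw (psi a h) (fun x y => sw (DH y) (fun y1 y2 => f x y1 y2))
  = sw (DH h) (fun h1 h2 => sw (psi a h1) (fun x y => f x y h2)).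

Lemma psiK (U : lmodType K) (f : A -> H -> U) : lin2 f -> forall a h,
  sw (psi a h) (fun x y => sw (phi x y) f) = f a h.
Proof. by move=> lf a h; case: (psi_phi_inv lf a h). Qed.

Lemma phiK (U : lmodType K) (f : A -> H -> U) : lin2 f -> forall a h,
  sw (phi a h) (fun x y => sw (psi x y) f) = f a h.
Proof. by move=> lf a h; case: (psi_phi_inv lf a h). Qed.

Lemma inv_unit (U : lmodType K) (f : A -> H -> U) : lin2 f -> sw (phi 1 1) f = f 1 1.
Proof.
by move=> lf; rewrite -(psiK lf) (psi_unit (f := fun x y => sw (phi x y) f)) //; lin_tac.
Qed.

Lemma inv_mul (U : lmodType K) (f : A -> H -> U) : lin2 f -> forall a h c g,
  sw (DH h) (fun h1 h2 => sw (DA c) (fun c1 c2 =>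
    sw (phi (a * rt' h1 c1) (lt' h2 c2 * g)) f))
  = sw (phi a h) (fun x y => sw (phi c g) (fun x' y' =>
      sw (DH y) (fun y1 y2 => sw (DA x') (fun x1' x2' =>
        f (x * rt y1 x1') (lt y2 x2' * y'))))).
Proof.
move=> lf a h c g.
pose G p q := sw (phi p q) f.
pose MG r s r' s' := sw (DH s) (fun y1 y2 => sw (DA r') (fun x1 x2 =>
  G (r * rt' y1 x1) (lt' y2 x2 * s'))).
have lG : lin2 G by rewrite /G; lin_tac.
transitivity (sw (phi a h) (fun x y => sw (psi x y) (fun r s => MG r s c g))).
  by rewrite phiK /MG /G //; lin_tac.
apply: eq_sw => x y.
transitivity (sw (psi x y) (fun r s => sw (phi c g) (fun x' y' =>
  sw (psi x' y') (fun r' s' => MG r s r' s')))).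
  by apply: eq_sw => r s; rewrite phiK // /MG /G; lin_tac.
rewrite exchange_sw; apply: eq_sw => x' y'.
rewrite /MG -psi_mul; last by rewrite /G; lin_tac.
by apply: eq_sw => y1 y2; apply: eq_sw => x1 x2; rewrite /G psiK.
Qed.

Lemma inv_coalg (U : lmodType K) (F : A -> H -> A -> H -> U) : lin4 F -> forall a h,
  sw (phi a h) (fun x y => sw (DA x) (fun x1 x2 => sw (DH y) (fun y1 y2 => F x1 y1 x2 y2)))
  = sw (DA a) (fun a1 a2 => sw (DH h) (fun h1 h2 =>
      sw (phi a1 h1) (fun x y => sw (phi a2 h2) (fun x' y' => F x y x' y')))).
Proof.
move=> lF a h.
pose G x y x' y' := sw (phi x y) (fun p q => sw (phi x' y') (fun p' q' => F p q p' q')).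
have lG : lin4 G by rewrite /G; lin_tac.
pose CG p q := sw (DA p) (fun x1 x2 => sw (DH q) (fun y1 y2 => G x1 y1 x2 y2)).
rewrite -[RHS]/(CG a h) -(phiK (f := CG)); last by rewrite /CG; lin_tac.
apply: eq_sw => x y; rewrite /CG psi_coalg //.
apply: eq_sw => x1 x2; apply: eq_sw => y1 y2; rewrite /G.
transitivity (sw (psi x1 y1) (fun p q => sw (phi p q) (fun r s => F r s x2 y2))).
  by rewrite psiK //; lin_tac.
apply: eq_sw => p q.
transitivity (sw (psi x2 y2) (fun p' q' => sw (phi p' q') (fun r' s' =>
  sw (phi p q) (fun r s => F r s r' s')))).
  by rewrite psiK //; lin_tac.
by apply: eq_sw => p' q'; rewrite exchange_sw.
Qed.

Lemma inv_cou a h : sw (phi a h) (fun x y => eA x * eH y) = eA a * eH h.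
Proof.
(* Compare the scalars through their action on [1 : A], which is nonzero. *)
have : sw (phi a h) (fun x y => (eA x * eH y) *: (1 : A)) = (eA a * eH h) *: 1.
  rewrite -(phiK (f := fun x y => (eA x * eH y) *: (1 : A))); last by lin_tac.
  by apply: eq_sw => x y; rewrite -scaler_swl psi_cou.
rewrite -scaler_swl => /eqP; rewrite -subr_eq0 -scalerBl scaler_eq0 oner_eq0 orbF subr_eq0.
by move/eqP.
Qed.

Lemma inv_lmod (U : lmodType K) (f : A -> H -> U) : lin2 f -> forall b a h,
  sw (phi (b * a) h) f = sw (phi a h) (fun x y => f (b * x) y).
Proof.
move=> lf b a h.
transitivity (sw (phi a h) (fun x y => sw (psi x y) (fun p q => sw (phi (b * p) q) f))).
  by rewrite phiK //; lin_tac.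
apply: eq_sw => x y.
by rewrite -(psi_lmod (f := fun p q => sw (phi p q) f)) ?psiK //; lin_tac.
Qed.

Lemma inv_comod (U : lmodType K) (F : A -> H -> H -> U) : lin3 F -> forall a h,
  sw (phi a h) (fun x y => sw (DH y) (fun y1 y2 => F x y1 y2))
  = sw (DH h) (fun h1 h2 => sw (phi a h1) (fun x y => F x y h2)).
Proof.
move=> lF a h.
pose G x y y' := sw (phi x y) (fun p q => F p q y').
pose R p q := sw (DH q) (fun q1 q2 => G p q1 q2).
rewrite -[RHS]/(R a h) -(phiK (f := R)); last by rewrite /R /G; lin_tac.
apply: eq_sw => x y; rewrite /R psi_comod; last by rewrite /G; lin_tac.
by apply: eq_sw => y1 y2; rewrite /G psiK //; lin_tac.
Qed.

End InverseIso.

Lemma bicrossed_iso_sym (K : fieldType) (A H : algType K) (sA : hopf_str A)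
    (sH : hopf_str H) (lt lt' : H -> A -> H) (rt rt' : H -> A -> A) :
  is_hopf sA -> is_hopf sH -> lin2 lt' -> lin2 rt' ->
  bicrossed_iso sA sH lt rt lt' rt' -> bicrossed_iso sA sH lt' rt' lt rt.
Proof.
move=> hA hH lt'l rt'l [psi [psit [[phi [phit inv]] [mulp [coalp [coup [lmodp comodp]]]]]]].
exists phi; split => //; split.
  by exists psi; split => // U f lf a h; case: (inv _ _ lf a h).
split.
  move=> U f lf; split; first exact: (inv_unit phit inv (fun U f lf => (mulp U f lf).1)).
  exact: (inv_mul hA hH lt'l rt'l phit inv (fun U f lf => (mulp U f lf).2)).
split; first exact: (inv_coalg hA hH phit inv coalp).
split; first exact: (inv_cou hA hH inv coup).
split; first exact: (inv_lmod phit inv lmodp).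
exact: (inv_comod hH phit inv comodp).
Qed.

(** * From an isomorphism to a lazy cocycle *)

Definition cocycle_deformation (K : fieldType) (A H : algType K) (sA : hopf_str A)
    (sH : hopf_str H) (lt : H -> A -> H) (rt rt' : H -> A -> A) (u : H -> A) : Prop :=
  (forall h c, rt' h c =
     sw (cop sH h) (fun h1 h' => sw (cop sH h') (fun h2 h3 =>
       sw (cop sA c) (fun c1 c2 => u h1 * rt h2 c1 * antip sA (u (lt h3 c2)))))) /\
  (forall h g,
     sw (cop sH h) (fun h1 h' => sw (cop sH h') (fun h2 h3 =>
       sw (cop sH g) (fun g1 g2 => u h1 * rt h2 (u g1) * antip sA (u (h3 * g2)))))
     = (cou sH g * cou sH h) *: 1) /\
  (forall h g, lt h (u g) = cou sH g *: h).

Section IsoToCocycle.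
Variables (K : fieldType) (A H : algType K) (sA : hopf_str A) (sH : hopf_str H).
Hypotheses (hA : is_hopf sA) (hH : is_hopf sH).
Local Notation DA := (cop sA).
Local Notation DH := (cop sH).
Local Notation eA := (cou sA).
Local Notation eH := (cou sH).
Local Notation SA := (antip sA).
Local Notation SH := (antip sH).
Variables (lt lt' : H -> A -> H) (rt rt' : H -> A -> A).
Hypotheses (mp : matched_pair sA sH lt rt) (mp' : matched_pair sA sH lt' rt').
Let lt_lin := mp_lt_lin mp.
Let rt_lin := mp_rt_lin mp.
Let lt'_lin := mp_lt_lin mp'.
Let rt'_lin := mp_rt_lin mp'.
Let SA_lin := antip_lin hA.
Let SH_lin := antip_lin hH.
Variable psi : A -> H -> seq (A * H).
Hypothesis psi_tensor : tensor_map psi.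
Hypothesis psi_unit : forall (U : lmodType K) (f : A -> H -> U), lin2 f ->
  sw (psi 1 1) f = f 1 1.
Hypothesis psi_mul : forall (U : lmodType K) (f : A -> H -> U), lin2 f -> forall a h c g,
  sw (DH h) (fun h1 h2 => sw (DA c) (fun c1 c2 =>
    sw (psi (a * rt' h1 c1) (lt' h2 c2 * g)) f))
  = sw (psi a h) (fun x y => sw (psi c g) (fun x' y' =>
      sw (DH y) (fun y1 y2 => sw (DA x') (fun x1' x2' =>
        f (x * rt y1 x1') (lt y2 x2' * y'))))).
Hypothesis psi_coalg : forall (U : lmodType K) (f : A -> H -> A -> H -> U), lin4 f ->
  forall a h,
  sw (psi a h) (fun x y => sw (DA x) (fun x1 x2 => sw (DH y) (fun y1 y2 => f x1 y1 x2 y2)))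
  = sw (DA a) (fun a1 a2 => sw (DH h) (fun h1 h2 =>
      sw (psi a1 h1) (fun x y => sw (psi a2 h2) (fun x' y' => f x y x' y')))).
Hypothesis psi_cou : forall a h, sw (psi a h) (fun x y => eA x * eH y) = eA a * eH h.
Hypothesis psi_lmod : forall (U : lmodType K) (f : A -> H -> U), lin2 f -> forall b a h,
  sw (psi (b * a) h) f = sw (psi a h) (fun x y => f (b * x) y).
Hypothesis psi_comod : forall (U : lmodType K) (f : A -> H -> H -> U), lin3 f -> forall a h,
  sw (psi a h) (fun x y => sw (DH y) (fun y1 y2 => f x y1 y2))
  = sw (DH h) (fun h1 h2 => sw (psi a h1) (fun x y => f x y h2)).

Definition iso_cocycle (h : H) : A := sw (psi 1 h) (fun x y => eH y *: x).
Local Notation u := iso_cocycle.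

Lemma iso_cocycle_lin : lin1 u.
Proof. by rewrite /iso_cocycle; lin_tac. Qed.
Let u_lin := iso_cocycle_lin.

Lemma iso_cocycleE (U : lmodType K) (L : A -> U) : lin1 L -> forall k,
  sw (psi 1 k) (fun x y => eH y *: L x) = L (u k).
Proof.
by move=> lL k; rewrite /iso_cocycle (sw_lin1 _ _ lL); apply: eq_sw => x y; rewrite lin1Z.
Qed.

Lemma iso_swE (U : lmodType K) (f : A -> H -> U) : lin2 f -> forall a h,
  sw (psi a h) f = sw (DH h) (fun h1 h2 => f (a * u h1) h2).
Proof.
move=> lf a h; rewrite -{1}(mulr1 a) psi_lmod //.
transitivity (sw (psi 1 h) (fun x y => sw (DH y) (fun y1 y2 => eH y1 *: f (a * x) y2))).
  by apply: eq_sw => x y; rewrite (counitlE hH (L := f (a * x))) //; lin_tac.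
rewrite psi_comod; last by lin_tac.
apply: eq_sw => h1 h2; rewrite -(iso_cocycleE (L := fun z => f (a * z) h2)) //; lin_tac.
Qed.

Lemma iso_sw1l (U : lmodType K) (f : A -> H -> U) : lin2 f -> forall h,
  sw (psi 1 h) f = sw (DH h) (fun h1 h2 => f (u h1) h2).
Proof. by move=> lf h; rewrite iso_swE //; apply: eq_sw => x y; rewrite mul1r. Qed.

Lemma iso_cocycle1 : u 1 = 1.
Proof. by rewrite /iso_cocycle psi_unit ?(cou1 hH) ?scale1r //; lin_tac. Qed.

Lemma iso_sw1r (U : lmodType K) (f : A -> H -> U) : lin2 f -> forall c,
  sw (psi c 1) f = f c 1.
Proof.
move=> lf c; rewrite iso_swE // (cop1 hH (f := fun h1 h2 => f (c * u h1) h2)).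
  by rewrite iso_cocycle1 mulr1.
lin_tac.
Qed.

Lemma iso_cocycle_cou h : eA (u h) = eH h.
Proof.
rewrite /iso_cocycle (sw_lin_form _ _ (cou_lin_form hA)).
transitivity (sw (psi 1 h) (fun x y => eA x * eH y)).
  by apply: eq_sw => x y; rewrite (lin_formZ (cou_lin_form hA)) mulrC.
by rewrite psi_cou (cou1 hA) mul1r.
Qed.

Lemma iso_cocycle_cop (U : lmodType K) (f : A -> A -> U) : lin2 f -> forall h,
  sw (DA (u h)) f = sw (DH h) (fun h1 h2 => f (u h1) (u h2)).
Proof.
move=> lf h; rewrite -(iso_cocycleE (L := fun z => sw (DA z) f)); last by lin_tac.
transitivity (sw (psi 1 h) (fun x y => sw (DA x) (fun x1 x2 => sw (DH y) (fun y1 y2 =>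
  (eH y1 * eH y2) *: f x1 x2)))).
  apply: eq_sw => x y; rewrite scaler_swr; apply: eq_sw => x1 x2.
  by rewrite -scaler_swl (cou_cop hH).
rewrite psi_coalg; last by lin_tac.
rewrite (cop1 hA (f := fun a1 a2 => sw (DH h) (fun h1 h2 => sw (psi a1 h1) (fun x y =>
  sw (psi a2 h2) (fun x' y' => (eH y * eH y') *: f x x'))))); last by lin_tac.
apply: eq_sw => h1 h2.
transitivity (sw (psi 1 h1) (fun x y => eH y *: f x (u h2))).
  apply: eq_sw => x y; rewrite -(iso_cocycleE (L := f x)); last by lin_tac.
  by rewrite scaler_swr; apply: eq_sw => x' y'; rewrite scalerA.
by rewrite (iso_cocycleE (L := fun z => f z (u h2))) //; lin_tac.
Qed.

Lemma iso_cocycle_lazy (U : lmodType K) (f : H -> A -> U) : lin2 f -> forall h,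
  sw (DH h) (fun h1 h2 => f h1 (u h2)) = sw (DH h) (fun h1 h2 => f h2 (u h1)).
Proof.
move=> lf h; transitivity (sw (DH h) (fun h1 h2 => sw (psi 1 h1) (fun x y =>
  sw (psi 1 h2) (fun x' y' => (eA x * eH y') *: f y x')))).
  apply: eq_sw => h1 h2.
  transitivity (sw (psi 1 h1) (fun x y => eA x *: f y (u h2))).
    rewrite iso_sw1l; last by lin_tac.
    rewrite (counitl hH (L := fun z => f z (u h2))) //; first by lin_tac.
    by move=> a b; rewrite iso_cocycle_cou.
  apply: eq_sw => x y; rewrite -(iso_cocycleE (L := fun z => eA x *: f y z)); last by lin_tac.
  by apply: eq_sw => x' y'; rewrite !scalerA mulrC.
rewrite -(cop1 hA (f := fun a1 a2 => sw (DH h) (fun h1 h2 => sw (psi a1 h1) (fun x y =>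
  sw (psi a2 h2) (fun x' y' => (eA x * eH y') *: f y x'))))); last by lin_tac.
rewrite -psi_coalg; last by lin_tac.
rewrite -(iso_sw1l (f := fun x y => f y x)); last by lin_tac.
apply: eq_sw => x y.
rewrite (counitl hA (L := f y)) //; first by lin_tac.
move=> a b; rewrite (counitr hH (L := fun z => eA a *: f z b)) //; first by lin_tac.
by move=> c d; rewrite scalerA mulrC.
Qed.

Lemma iso_cocycle_antip k : sw (DH k) (fun k1 k2 => u k1 * SA (u k2)) = eH k *: 1.
Proof. exact: (coalg_map_antip hA iso_cocycle_cop iso_cocycle_cou k).1. Qed.

Lemma iso_counitA a k : sw (psi a k) (fun x y => eA x *: y) = eA a *: k.
Proof.
rewrite iso_swE; last by lin_tac.
rewrite (counitl hH (L := fun z => eA a *: z)) //; first by lin_tac.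
by move=> b1 b2; rewrite (couM hA) iso_cocycle_cou scalerA mulrC.
Qed.

(* Multiplicativity of [psi] on [(1 >< h) (c >< g)]: every remaining property
   is obtained by testing this identity against a suitable bilinear [f]. *)
Lemma iso_mul1l (U : lmodType K) (f : A -> H -> U) : lin2 f -> forall h c g,
  sw (DH h) (fun h1 h2 => sw (DA c) (fun c1 c2 => sw (psi (rt' h1 c1) (lt' h2 c2 * g)) f))
  = sw (DH h) (fun h1 h2 => sw (psi c g) (fun x y => sw (DH h2) (fun y1 y2 =>
      sw (DA x) (fun x1 x2 => f (u h1 * rt y1 x1) (lt y2 x2 * y))))).
Proof.
move=> lf h c g; have := psi_mul lf 1 h c g; rewrite iso_sw1l; last by lin_tac.
by under eq_sw do under eq_sw do rewrite mul1r.
Qed.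

Lemma iso_lt_eq : lt' = lt.
Proof.
apply: functional_extensionality => h; apply: functional_extensionality => c.
have := iso_mul1l (f := fun x y => eA x *: y) ltac:(lin_tac) h c 1.
rewrite (counitl hH (L := fun z => lt' z c)); first last.
- move=> h1 h2; rewrite -(counitlE hA (L := fun z => eH h1 *: lt' h2 z)); last by lin_tac.
  by apply: eq_sw => c1 c2; rewrite iso_counitA mulr1 (mp_cou_rt mp'); scale_ring.
- by lin_tac.
move=> ->; rewrite (counitl hH (L := fun z => lt z c)) //; first by lin_tac.
move=> h1 h2; rewrite iso_sw1r; last by lin_tac.
rewrite -(counitlE hH (L := fun z => eH h1 *: lt z c)); last by lin_tac.
apply: eq_sw => y1 y2.
rewrite -(counitlE hA (L := fun z => eH y1 *: (eH h1 *: lt y2 z))); last by lin_tac.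
apply: eq_sw => x1 x2.
by rewrite (couM hA) iso_cocycle_cou (mp_cou_rt mp) mulr1; scale_ring.
Qed.

Lemma iso_lt_cocycle_sw h g : sw (DH g) (fun g1 g2 => lt h (u g1) * g2) = h * g.
Proof.
have := iso_mul1l (f := fun x y => eA x *: y) ltac:(lin_tac) h 1 g.
rewrite (counitl hH (L := fun z => z * g)); first last.
- move=> h1 h2; rewrite (cop1 hA (f := fun c1 c2 =>
    sw (psi (rt' h1 c1) (lt' h2 c2 * g)) (fun x y => eA x *: y))); last by lin_tac.
  by rewrite iso_counitA (mp_rt1 mp') (mp_lt1 mp') (lin_formZ (cou_lin_form hA)) (cou1 hA) mulr1.
- by lin_tac.
move=> ->; rewrite (counitl hH (L := fun z => sw (DH g) (fun g1 g2 => lt z (u g1) * g2))) //;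
  first by lin_tac.
move=> h1 h2; rewrite iso_sw1l; last by lin_tac.
rewrite scaler_swr; apply: eq_sw => g1 g2.
rewrite -(counitlE hH (L := fun z => eH h1 *: (lt z (u g1) * g2))); last by lin_tac.
apply: eq_sw => y1 y2.
rewrite -(counitlE hA (L := fun z => eH y1 *: (eH h1 *: (lt y2 z * g2)))); last by lin_tac.
apply: eq_sw => x1 x2.
by rewrite (couM hA) iso_cocycle_cou (mp_cou_rt mp); scale_ring.
Qed.

(* Multiply [iso_lt_cocycle_sw] on the right by [S g2] and use the antipode. *)
Lemma iso_lt_cocycle h g : lt h (u g) = eH g *: h.
Proof.
symmetry; transitivity (h * sw (DH g) (fun g1 g2 => g1 * SH g2)).
  by rewrite (antipode hH g).2 -scalerAr mulr1.
rewrite mulr_swr.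
transitivity (sw (DH g) (fun g1 g2 => sw (DH g1) (fun k1 k2 => lt h (u k1) * k2 * SH g2))).
  by apply: eq_sw => g1 g2; rewrite mulrA -(iso_lt_cocycle_sw h g1) mulr_swl.
rewrite (coassoc hH (f := fun k1 k2 g2 => lt h (u k1) * k2 * SH g2)); last by lin_tac.
rewrite (counitr hH (L := fun z => lt h (u z))) //; first by lin_tac.
move=> a b; transitivity (lt h (u a) * sw (DH b) (fun k1 k2 => k1 * SH k2)).
  by rewrite mulr_swr; apply: eq_sw => k1 k2; rewrite mulrA.
by rewrite (antipode hH b).2 -scalerAr mulr1.
Qed.

Lemma iso_rt_formula h c : rt' h c =
  sw (DH h) (fun h1 h' => sw (DH h') (fun h2 h3 =>
    sw (DA c) (fun c1 c2 => u h1 * rt h2 c1 * SA (u (lt h3 c2))))).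
Proof.
have := iso_mul1l (f := fun x y => x * SA (u y)) ltac:(lin_tac) h c 1.
rewrite (counitr hH (L := fun z => rt' z c)); first last.
- move=> h1 h2; rewrite -(counitrE hA (L := fun z => eH h2 *: rt' h1 z)); last by lin_tac.
  apply: eq_sw => c1 c2; rewrite iso_swE; last by lin_tac.
  transitivity (rt' h1 c1 * sw (DH (lt' h2 c2)) (fun k1 k2 => u k1 * SA (u k2))).
    by rewrite mulr1 mulr_swr; apply: eq_sw => k1 k2; rewrite !mulrA.
  by rewrite iso_cocycle_antip (mp_cou_lt mp') -scalerAr mulr1; scale_ring.
- by lin_tac.
move=> ->; apply: eq_sw => h1 h2; rewrite iso_sw1r; last by lin_tac.
by apply: eq_sw => y1 y2; apply: eq_sw => x1 x2; rewrite mulr1.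
Qed.

Lemma iso_cocycle_cond h g :
  sw (DH h) (fun h1 h' => sw (DH h') (fun h2 h3 =>
    sw (DH g) (fun g1 g2 => u h1 * rt h2 (u g1) * SA (u (h3 * g2)))))
  = (eH g * eH h) *: 1.
Proof.
have := iso_mul1l (f := fun x y => x * SA (u y)) ltac:(lin_tac) h 1 g.
rewrite (counitl hH (L := fun z => eH (z * g) *: (1 : A))); first last.
- move=> h1 h2; rewrite (cop1 hA (f := fun c1 c2 =>
    sw (psi (rt' h1 c1) (lt' h2 c2 * g)) (fun x y => x * SA (u y)))); last by lin_tac.
  rewrite (mp_rt1 mp') (mp_lt1 mp') iso_swE; last by lin_tac.
  transitivity ((eH h1 *: 1) * sw (DH (h2 * g)) (fun k1 k2 => u k1 * SA (u k2))).
    by rewrite mulr_swr; apply: eq_sw => k1 k2; rewrite !mulrA.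
  by rewrite iso_cocycle_antip -scalerAl mul1r.
- by lin_tac.
move=> E; rewrite [eH g * _]mulrC -(couM hH) E.
apply: eq_sw => h1 h2; rewrite iso_sw1l; last by lin_tac.
rewrite exchange_sw; apply: eq_sw => g1 g2; apply: eq_sw => y1 y2.
rewrite iso_cocycle_cop; last by lin_tac.
symmetry; rewrite (counitr hH (L := fun z => u h1 * rt y1 (u z) * SA (u (y2 * g2)))) //;
  first by lin_tac.
move=> k1 k2; rewrite iso_lt_cocycle -scalerAl.
by rewrite (lin1Z (f := fun z => SA (u z))) -?scalerAr //; lin_tac.
Qed.

Lemma iso_deformation :
  lt' = lt /\ exists v, coalg_lazy_cocycle sA sH v /\ cocycle_deformation sA sH lt rt rt' v.
Proof.
split; first exact: iso_lt_eq.
exists u; split.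
  split; first exact: iso_cocycle_lin.
  split; first exact: iso_cocycle_cop.
  split; first exact: iso_cocycle_cou.
  by split; [exact: iso_cocycle1 | exact: iso_cocycle_lazy].
split; first exact: iso_rt_formula.
by split; [exact: iso_cocycle_cond | exact: iso_lt_cocycle].
Qed.

End IsoToCocycle.

Lemma bicrossed_iso_deformation (K : fieldType) (A H : algType K)
    (sA : hopf_str A) (sH : hopf_str H) (lt lt' : H -> A -> H) (rt rt' : H -> A -> A) :
  is_hopf sA -> is_hopf sH -> matched_pair sA sH lt rt -> matched_pair sA sH lt' rt' ->
  bicrossed_iso sA sH lt' rt' lt rt ->
  lt' = lt /\ exists u, coalg_lazy_cocycle sA sH u /\ cocycle_deformation sA sH lt rt rt' u.
Proof.
move=> hA hH mp mp' [psi [psit [_ [mulp [coalp [coup [lmodp comodp]]]]]]].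
exact: (iso_deformation hA hH mp mp' psit (fun U f lf => (mulp U f lf).1)
  (fun U f lf => (mulp U f lf).2) coalp coup lmodp comodp).
Qed.

(** * From a lazy cocycle to an isomorphism *)

Section CocycleToIso.
Variables (K : fieldType) (A H : algType K) (sA : hopf_str A) (sH : hopf_str H).
Hypotheses (hA : is_hopf sA) (hH : is_hopf sH).
Local Notation DA := (cop sA).
Local Notation DH := (cop sH).
Local Notation eA := (cou sA).
Local Notation eH := (cou sH).
Local Notation SA := (antip sA).
Variables (lt : H -> A -> H) (rt rt' : H -> A -> A).
Hypothesis mp : matched_pair sA sH lt rt.
Let lt_lin := mp_lt_lin mp.
Let rt_lin := mp_rt_lin mp.
Let SA_lin := antip_lin hA.
Variable u : H -> A.
Hypotheses (u_lin : lin1 u)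
  (u_cop : forall (U : lmodType K) (f : A -> A -> U), lin2 f -> forall h,
     sw (DA (u h)) f = sw (DH h) (fun h1 h2 => f (u h1) (u h2)))
  (u_cou : forall h, eA (u h) = eH h) (u1 : u 1 = 1)
  (u_lazy : forall (U : lmodType K) (f : H -> A -> U), lin2 f -> forall h,
     sw (DH h) (fun h1 h2 => f h1 (u h2)) = sw (DH h) (fun h1 h2 => f h2 (u h1))).
Hypothesis rt'E : forall h c, rt' h c =
  sw (DH h) (fun h1 h' => sw (DH h') (fun h2 h3 =>
    sw (DA c) (fun c1 c2 => u h1 * rt h2 c1 * SA (u (lt h3 c2))))).
Hypothesis u_cocycle : forall h g,
  sw (DH h) (fun h1 h' => sw (DH h') (fun h2 h3 =>
    sw (DH g) (fun g1 g2 => u h1 * rt h2 (u g1) * SA (u (h3 * g2)))))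
  = (eH g * eH h) *: 1.
Hypothesis lt_u : forall h g, lt h (u g) = eH g *: h.

Definition cocycle_map (a : A) (h : H) : seq (A * H) :=
  map (fun p => (a * u p.1, p.2)) (DH h).
Definition cocycle_map_inv (a : A) (h : H) : seq (A * H) :=
  map (fun p => (a * SA (u p.1), p.2)) (DH h).

Lemma cocycle_mapE (U : nmodType) (f : A -> H -> U) a h :
  sw (cocycle_map a h) f = sw (DH h) (fun x y => f (a * u x) y).
Proof. exact: sw_map. Qed.

Lemma cocycle_map_invE (U : nmodType) (f : A -> H -> U) a h :
  sw (cocycle_map_inv a h) f = sw (DH h) (fun x y => f (a * SA (u x)) y).
Proof. exact: sw_map. Qed.

Lemma cocycle_map_tensor : tensor_map cocycle_map.
Proof.
move=> U f lf; have [l1 l2] : lin2 (fun a h => sw (DH h) (fun x y => f (a * u x) y)).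
  by lin_tac.
by split=> z a x y; rewrite !cocycle_mapE; [apply: l1 | apply: l2].
Qed.

Lemma cocycle_map_inv_tensor : tensor_map cocycle_map_inv.
Proof.
move=> U f lf; have [l1 l2] : lin2 (fun a h => sw (DH h) (fun x y => f (a * SA (u x)) y)).
  by lin_tac.
by split=> z a x y; rewrite !cocycle_map_invE; [apply: l1 | apply: l2].
Qed.

Lemma cocycle_antipr k : sw (DH k) (fun k1 k2 => u k1 * SA (u k2)) = eH k *: 1.
Proof. exact: (coalg_map_antip hA u_cop u_cou k).1. Qed.

Lemma cocycle_antipl k : sw (DH k) (fun k1 k2 => SA (u k1) * u k2) = eH k *: 1.
Proof. exact: (coalg_map_antip hA u_cop u_cou k).2. Qed.

Lemma sw_cocycle_antipr (U : lmodType K) (F : A -> H -> U) : lin2 F -> forall x y,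
  sw (DH y) (fun y1 z => sw (DH z) (fun y2 y3 => F (x * u y1 * SA (u y2)) y3)) = F x y.
Proof.
move=> lF x y; rewrite -(coassoc hH (f := fun p q r => F (x * u p * SA (u q)) r));
  last by lin_tac.
apply: (counitl hH) => [|w y3]; first by lin_tac.
transitivity (F (x * sw (DH w) (fun y1 y2 => u y1 * SA (u y2))) y3).
  rewrite (sw_lin1 _ _ (L := fun z => F (x * z) y3)); last by lin_tac.
  by apply: eq_sw => ? ?; rewrite !mulrA.
by rewrite cocycle_antipr -scalerAr mulr1 (lin1Z (f := fun z => F z y3)) //; lin_tac.
Qed.

Lemma sw_cocycle_antipl (U : lmodType K) (F : A -> H -> U) : lin2 F -> forall x y,
  sw (DH y) (fun y1 z => sw (DH z) (fun y2 y3 => F (x * SA (u y1) * u y2) y3)) = F x y.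
Proof.
move=> lF x y; rewrite -(coassoc hH (f := fun p q r => F (x * SA (u p) * u q) r));
  last by lin_tac.
apply: (counitl hH) => [|w y3]; first by lin_tac.
transitivity (F (x * sw (DH w) (fun y1 y2 => SA (u y1) * u y2)) y3).
  rewrite (sw_lin1 _ _ (L := fun z => F (x * z) y3)); last by lin_tac.
  by apply: eq_sw => ? ?; rewrite !mulrA.
by rewrite cocycle_antipl -scalerAr mulr1 (lin1Z (f := fun z => F z y3)) //; lin_tac.
Qed.

Lemma cocycle_mapK (U : lmodType K) (f : A -> H -> U) : lin2 f -> forall a h,
  sw (cocycle_map a h) (fun x y => sw (cocycle_map_inv x y) f) = f a h /\
  sw (cocycle_map_inv a h) (fun x y => sw (cocycle_map x y) f) = f a h.
Proof.
move=> lf a h; split.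
  rewrite -[RHS](sw_cocycle_antipr lf) cocycle_mapE.
  by apply: eq_sw => x y; rewrite cocycle_map_invE.
rewrite -[RHS](sw_cocycle_antipl lf) cocycle_map_invE.
by apply: eq_sw => x y; rewrite cocycle_mapE.
Qed.

Lemma cocycle_map_unit (U : lmodType K) (f : A -> H -> U) : lin2 f ->
  sw (cocycle_map 1 1) f = f 1 1.
Proof.
by move=> lf; rewrite cocycle_mapE (cop1 hH (f := fun x y => f (1 * u x) y)) ?u1 ?mulr1 //;
  lin_tac.
Qed.

Lemma cocycle_map_cou a h : sw (cocycle_map a h) (fun x y => eA x * eH y) = eA a * eH h.
Proof.
rewrite cocycle_mapE -(counitl_form hH h (k := fun y => eA a * eH y)); last by lin_tac.
by apply: eq_sw => x y; rewrite (couM hA) u_cou; ring.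
Qed.

Lemma cocycle_map_lmod (U : lmodType K) (f : A -> H -> U) : lin2 f -> forall b a h,
  sw (cocycle_map (b * a) h) f = sw (cocycle_map a h) (fun x y => f (b * x) y).
Proof. by move=> lf b a h; rewrite !cocycle_mapE; apply: eq_sw => x y; rewrite mulrA. Qed.

Lemma cocycle_map_comod (U : lmodType K) (F : A -> H -> H -> U) : lin3 F -> forall a h,
  sw (cocycle_map a h) (fun x y => sw (DH y) (fun y1 y2 => F x y1 y2))
  = sw (DH h) (fun h1 h2 => sw (cocycle_map a h1) (fun x y => F x y h2)).
Proof.
move=> lF a h; rewrite cocycle_mapE.
under [RHS]eq_sw do rewrite cocycle_mapE.
by rewrite (coassoc hH (f := fun x y h2 => F (a * u x) y h2)) //; lin_tac.
Qed.

(* The lazy condition, propagated one level deeper along the coproduct. *)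
Lemma cocycle_lazy2 (U : lmodType K) (G : A -> H -> A -> H -> U) : lin4 G -> forall h,
  sw (DH h) (fun h1 h2 => sw (DH h1) (fun k1 k2 =>
    sw (DH h2) (fun y1 y2 => G (u k1) y1 (u k2) y2)))
  = sw (DH h) (fun h1 h2 => sw (DH h1) (fun k1 k2 =>
      sw (DH h2) (fun m1 m2 => G (u k1) k2 (u m1) m2))).
Proof.
move=> lG h.
rewrite (coassoc hH (f := fun k1 k2 h2 => sw (DH h2) (fun y1 y2 => G (u k1) y1 (u k2) y2)));
  last by lin_tac.
rewrite (coassoc hH (f := fun k1 k2 h2 => sw (DH h2) (fun m1 m2 => G (u k1) k2 (u m1) m2)));
  last by lin_tac.
apply: eq_sw => p1 r.
rewrite -(coassoc hH (f := fun p2 p3 p4 => G (u p1) p3 (u p2) p4)); last by lin_tac.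
rewrite -(coassoc hH (f := fun p2 p3 p4 => G (u p1) p2 (u p3) p4)); last by lin_tac.
apply: eq_sw => w p4.
by symmetry; apply: (u_lazy (f := fun q z => G (u p1) q z p4)); lin_tac.
Qed.

Lemma cocycle_map_coalg (U : lmodType K) (F : A -> H -> A -> H -> U) : lin4 F ->
  forall a h,
  sw (cocycle_map a h) (fun x y => sw (DA x) (fun x1 x2 => sw (DH y) (fun y1 y2 =>
    F x1 y1 x2 y2)))
  = sw (DA a) (fun a1 a2 => sw (DH h) (fun h1 h2 =>
      sw (cocycle_map a1 h1) (fun x y => sw (cocycle_map a2 h2) (fun x' y' => F x y x' y')))).
Proof.
move=> lF a h; rewrite cocycle_mapE.
transitivity (sw (DA a) (fun a1 a2 => sw (DH h) (fun h1 h2 => sw (DH h1) (fun k1 k2 =>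
  sw (DH h2) (fun y1 y2 => F (a1 * u k1) y1 (a2 * u k2) y2))))).
  rewrite exchange_sw; apply: eq_sw => h1 h2.
  rewrite (copM hA (f := fun x1 x2 => sw (DH h2) (fun y1 y2 => F x1 y1 x2 y2)));
    last by lin_tac.
  apply: eq_sw => a1 a2; rewrite (u_cop (f := fun v1 v2 =>
    sw (DH h2) (fun y1 y2 => F (a1 * v1) y1 (a2 * v2) y2))) //; lin_tac.
apply: eq_sw => a1 a2.
rewrite (cocycle_lazy2 (G := fun p q p' q' => F (a1 * p) q (a2 * p') q')); last by lin_tac.
by apply: eq_sw => h1 h2; rewrite cocycle_mapE; apply: eq_sw => k1 k2; rewrite cocycle_mapE.
Qed.

Lemma sw_insert_cocycle_antip_mul (U : lmodType K) (F : A -> H -> U) : lin2 F ->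
  forall x k g,
  F x (k * g) = sw (DH k) (fun a1 a2 => sw (DH g) (fun b1 b2 => sw (DH a2) (fun c1 c2 =>
    sw (DH b2) (fun d1 d2 => F (x * SA (u (a1 * b1)) * u (c1 * d1)) (c2 * d2))))).
Proof.
move=> lF x k g; rewrite -(sw_cocycle_antipl lF).
rewrite (copM hH (f := fun y1 z => sw (DH z) (fun y2 y3 => F (x * SA (u y1) * u y2) y3)));
  last by lin_tac.
apply: eq_sw => a1 a2; apply: eq_sw => b1 b2.
by rewrite (copM hH (f := fun y2 y3 => F (x * SA (u (a1 * b1)) * u y2) y3)) //; lin_tac.
Qed.

(* The cocycle condition, in the form [u(k g) = u(k1) (k2 |> u(g1))], kept
   tensored with the remaining legs [k3 g2]. *)
Lemma cocycleM (U : lmodType K) (F : A -> H -> U) : lin2 F -> forall k g,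
  sw (DH k) (fun k1 k2 => sw (DH g) (fun g1 g2 => F (u (k1 * g1)) (k2 * g2)))
  = sw (DH k) (fun k1 r => sw (DH r) (fun k2 k3 => sw (DH g) (fun g1 g2 =>
      F (u k1 * rt k2 (u g1)) (k3 * g2)))).
Proof.
move=> lF k g.
pose B x p q := sw (DH p) (fun c1 c2 => sw (DH q) (fun d1 d2 => F (x * u (c1 * d1)) (c2 * d2))).
have lB : lin3 B by rewrite /B; lin_tac.
transitivity (B 1 k g).
  by rewrite /B; apply: eq_sw => k1 k2; apply: eq_sw => g1 g2; rewrite mul1r.
transitivity (sw (DH k) (fun P Q => sw (DH g) (fun P' Q' => (eH P' * eH P) *: B 1 Q Q'))).
  symmetry; apply: (counitl hH (L := fun z => B 1 z g)) => [|P Q]; first by lin_tac.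
  apply: (counitl hH (L := fun z => eH P *: B 1 Q z)) => [|P' Q']; first by lin_tac.
  by scale_ring.
transitivity (sw (DH k) (fun P Q => sw (DH g) (fun P' Q' => sw (DH P) (fun k1 w =>
  sw (DH w) (fun k2 a1 => sw (DH P') (fun g1 b1 =>
    B (u k1 * rt k2 (u g1) * SA (u (a1 * b1))) Q Q')))))).
  apply: eq_sw => P Q; apply: eq_sw => P' Q'.
  rewrite -(lin1Z (f := fun z => B z Q Q')) -?u_cocycle; last by lin_tac.
  rewrite (sw_lin1 _ _ (L := fun z => B z Q Q')); last by lin_tac.
  apply: eq_sw => k1 w; rewrite (sw_lin1 _ _ (L := fun z => B z Q Q')); last by lin_tac.
  by apply: eq_sw => k2 a1; rewrite (sw_lin1 _ _ (L := fun z => B z Q Q')) //; lin_tac.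
symmetry; transitivity (sw (DH k) (fun k1 r => sw (DH r) (fun k2 k3 => sw (DH k3) (fun a1 a2 =>
  sw (DH g) (fun g1 g2 => sw (DH g2) (fun b1 b2 =>
    B (u k1 * rt k2 (u g1) * SA (u (a1 * b1))) a2 b2)))))).
  apply: eq_sw => k1 r; apply: eq_sw => k2 k3; rewrite [RHS]exchange_sw.
  by apply: eq_sw => g1 g2; apply: sw_insert_cocycle_antip_mul.
rewrite (coassoc4 hH (B := fun k1 k2 a1 a2 => sw (DH g) (fun g1 g2 => sw (DH g2) (fun b1 b2 =>
  B (u k1 * rt k2 (u g1) * SA (u (a1 * b1))) a2 b2)))); last by lin_tac.
apply: eq_sw => P Q; rewrite [in RHS]exchange_sw; apply: eq_sw => k1 w.
rewrite [in RHS]exchange_sw; apply: eq_sw => k2 a1.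
by rewrite -(coassoc hH (f := fun g1 b1 b2 =>
  B (u k1 * rt k2 (u g1) * SA (u (a1 * b1))) Q b2)) //; lin_tac.
Qed.

Lemma rt_cocycleE (U : lmodType K) (F : A -> H -> U) : lin2 F -> forall k g,
  sw (DH k) (fun k1 k2 => sw (DH k2) (fun q1 q2 => sw (DH g) (fun g1 g2 =>
    F (SA (u k1) * u (q1 * g1)) (q2 * g2))))
  = sw (DH k) (fun k1 k2 => sw (DH g) (fun g1 g2 => F (rt k1 (u g1)) (k2 * g2))).
Proof.
move=> lF k g.
transitivity (sw (DH k) (fun k1 k2 => sw (DH k2) (fun q1 r => sw (DH r) (fun q2 q3 =>
  sw (DH g) (fun g1 g2 => F (SA (u k1) * (u q1 * rt q2 (u g1))) (q3 * g2)))))).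
  by apply: eq_sw => k1 k2; rewrite (cocycleM (F := fun z y => F (SA (u k1) * z) y)) //; lin_tac.
rewrite -(coassoc hH (f := fun k1 q1 r => sw (DH r) (fun q2 q3 => sw (DH g) (fun g1 g2 =>
  F (SA (u k1) * (u q1 * rt q2 (u g1))) (q3 * g2))))); last by lin_tac.
apply: (counitl hH (L := fun z => sw (DH z) (fun q2 q3 => sw (DH g) (fun g1 g2 =>
  F (rt q2 (u g1)) (q3 * g2))))) => [|x r]; first by lin_tac.
rewrite exchange_sw scaler_swr; apply: eq_sw => q2 q3.
rewrite exchange_sw scaler_swr; apply: eq_sw => g1 g2.
transitivity (F (sw (DH x) (fun k1 q1 => SA (u k1) * u q1) * rt q2 (u g1)) (q3 * g2)).
  rewrite (sw_lin1 _ _ (L := fun z => F (z * rt q2 (u g1)) (q3 * g2))); last by lin_tac.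
  by apply: eq_sw => k1 q1; rewrite mulrA.
by rewrite cocycle_antipl -scalerAl mul1r (lin1Z (f := fun z => F z (q3 * g2))) //; lin_tac.
Qed.

(* Both sides of multiplicativity are brought to the common form
   [a u(h1) (h2 |> c1) (k1 |> u(g1)) >< k2 g2], with [k = h3 <| c2]. *)
Lemma cocycle_map_mul_lhs (U : lmodType K) (f : A -> H -> U) : lin2 f -> forall a h c g,
  sw (DH h) (fun h1 h2 => sw (DA c) (fun c1 c2 =>
    sw (cocycle_map (a * rt' h1 c1) (lt h2 c2 * g)) f))
  = sw (DH h) (fun p1 r => sw (DH r) (fun p2 s => sw (DA c) (fun d1 z =>
      sw (DH (lt s z)) (fun k1 k2 => sw (DH g) (fun g1 g2 =>
        f (a * u p1 * rt p2 d1 * rt k1 (u g1)) (k2 * g2)))))).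
Proof.
move=> lf a h c g.
pose G x q := sw (DH q) (fun q1 q2 => sw (DH g) (fun g1 g2 =>
  f (a * x * u (q1 * g1)) (q2 * g2))).
have lG : lin2 G by rewrite /G; lin_tac.
transitivity (sw (DH h) (fun h1 h2 => sw (DH h1) (fun p1 p' => sw (DH p') (fun p2 p3 =>
  sw (DA c) (fun c1 c2 => sw (DA c1) (fun d1 d2 =>
    G (u p1 * rt p2 d1 * SA (u (lt p3 d2))) (lt h2 c2))))))).
  apply: eq_sw => h1 h2; under [RHS]eq_sw do rewrite exchange_sw.
  rewrite [RHS]exchange_sw; apply: eq_sw => c1 c2.
  rewrite cocycle_mapE (copM hH (f := fun x y => f (a * rt' h1 c1 * u x) y)); last by lin_tac.
  rewrite -/(G _ _) rt'E (sw_lin1 _ _ (L := fun z => G z (lt h2 c2))); last by lin_tac.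
  apply: eq_sw => p1 p'; rewrite (sw_lin1 _ _ (L := fun z => G z (lt h2 c2))); last by lin_tac.
  by apply: eq_sw => p2 p3; rewrite (sw_lin1 _ _ (L := fun z => G z (lt h2 c2))) //; lin_tac.
transitivity (sw (DH h) (fun h1 h2 => sw (DH h1) (fun p1 p' => sw (DH p') (fun p2 p3 =>
  sw (DA c) (fun d1 z => sw (DA z) (fun d2 c2 =>
    G (u p1 * rt p2 d1 * SA (u (lt p3 d2))) (lt h2 c2))))))).
  apply: eq_sw => h1 h2; apply: eq_sw => p1 p'; apply: eq_sw => p2 p3.
  by rewrite (coassoc hA (f := fun d1 d2 c2 => G (u p1 * rt p2 d1 * SA (u (lt p3 d2))) (lt h2 c2)))
    //; lin_tac.
rewrite (coassoc hH (f := fun p1 p' h2 => sw (DH p') (fun p2 p3 => sw (DA c) (fun d1 z =>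
  sw (DA z) (fun d2 c2 => G (u p1 * rt p2 d1 * SA (u (lt p3 d2))) (lt h2 c2)))))); last by lin_tac.
apply: eq_sw => p1 r.
rewrite (coassoc hH (f := fun p2 p3 h2 => sw (DA c) (fun d1 z =>
  sw (DA z) (fun d2 c2 => G (u p1 * rt p2 d1 * SA (u (lt p3 d2))) (lt h2 c2))))); last by lin_tac.
apply: eq_sw => p2 s; rewrite exchange_sw; apply: eq_sw => d1 z.
rewrite -(mp_cop_lt mp (f := fun k1 k2 => G (u p1 * rt p2 d1 * SA (u k1)) k2)); last by lin_tac.
rewrite -(rt_cocycleE (F := fun z y => f (a * u p1 * rt p2 d1 * z) y)); last by lin_tac.
by apply: eq_sw => k1 k2; apply: eq_sw => q1 q2; apply: eq_sw => g1 g2; rewrite !mulrA.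
Qed.

Lemma cocycle_map_mul_rhs (U : lmodType K) (f : A -> H -> U) : lin2 f -> forall a h c g,
  sw (cocycle_map a h) (fun x y => sw (cocycle_map c g) (fun x' y' =>
    sw (DH y) (fun y1 y2 => sw (DA x') (fun x1' x2' => f (x * rt y1 x1') (lt y2 x2' * y')))))
  = sw (DH h) (fun p1 r => sw (DH r) (fun p2 s => sw (DA c) (fun d1 z =>
      sw (DH (lt s z)) (fun k1 k2 => sw (DH g) (fun g1 g2 =>
        f (a * u p1 * rt p2 d1 * rt k1 (u g1)) (k2 * g2)))))).
Proof.
move=> lf a h c g.
transitivity (sw (DH h) (fun h1 h2 => sw (DH g) (fun g1 g2 => sw (DH h2) (fun y1 y2 =>
  sw (DA c) (fun c1 c2 => f (a * u h1 * rt y1 (c1 * u g1)) (lt y2 c2 * g2)))))).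
  rewrite cocycle_mapE; apply: eq_sw => h1 h2; rewrite cocycle_mapE; apply: eq_sw => g1 g2.
  apply: eq_sw => y1 y2.
  rewrite (copM hA (f := fun x1 x2 => f (a * u h1 * rt y1 x1) (lt y2 x2 * g2)));
    last by lin_tac.
  apply: eq_sw => c1 c2.
  rewrite (u_cop (f := fun v1 v2 => f (a * u h1 * rt y1 (c1 * v1)) (lt y2 (c2 * v2) * g2)));
    last by lin_tac.
  apply: (counitr hH (L := fun z => f (a * u h1 * rt y1 (c1 * u z)) (lt y2 c2 * g2)))
    => [|w1 w2]; first by lin_tac.
  rewrite (mp_ltM mp) lt_u -scalerAl.
  by rewrite (lin1Z (f := f (a * u h1 * rt y1 (c1 * u w1)))) //; lin_tac.
transitivity (sw (DH h) (fun h1 h2 => sw (DH h2) (fun y1 y2 => sw (DH y1) (fun t1 t2 =>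
  sw (DA c) (fun c1 c2 => sw (DA c1) (fun e1 e2 => sw (DH g) (fun g1 g2 =>
    f (a * u h1 * (rt t1 e1 * rt (lt t2 e2) (u g1))) (lt y2 c2 * g2)))))))).
  apply: eq_sw => h1 h2; rewrite exchange_sw; apply: eq_sw => y1 y2.
  rewrite exchange_sw [RHS]exchange_sw; apply: eq_sw => c1 c2.
  under [RHS]eq_sw do rewrite exchange_sw.
  rewrite [RHS]exchange_sw; apply: eq_sw => g1 g2.
  rewrite (mp_rtM mp) (sw_lin1 _ _ (L := fun z => f (a * u h1 * z) (lt y2 c2 * g2)));
    last by lin_tac.
  by apply: eq_sw => t1 t2; rewrite (sw_lin1 _ _ (L := fun z => f (a * u h1 * z) (lt y2 c2 * g2)))
    //; lin_tac.
apply: eq_sw => p1 r.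
rewrite (coassoc hH (f := fun t1 t2 y2 => sw (DA c) (fun c1 c2 => sw (DA c1) (fun e1 e2 =>
  sw (DH g) (fun g1 g2 => f (a * u p1 * (rt t1 e1 * rt (lt t2 e2) (u g1))) (lt y2 c2 * g2))))));
  last by lin_tac.
apply: eq_sw => p2 s.
transitivity (sw (DH s) (fun t2 y2 => sw (DA c) (fun d1 z => sw (DA z) (fun e2 c2 =>
  sw (DH g) (fun g1 g2 => f (a * u p1 * (rt p2 d1 * rt (lt t2 e2) (u g1))) (lt y2 c2 * g2)))))).
  apply: eq_sw => t2 y2; rewrite (coassoc hA (f := fun e1 e2 c2 => sw (DH g) (fun g1 g2 =>
    f (a * u p1 * (rt p2 e1 * rt (lt t2 e2) (u g1))) (lt y2 c2 * g2)))) //; lin_tac.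
rewrite exchange_sw; apply: eq_sw => d1 z.
rewrite -(mp_cop_lt mp (f := fun k1 k2 => sw (DH g) (fun g1 g2 =>
  f (a * u p1 * (rt p2 d1 * rt k1 (u g1))) (k2 * g2)))); last by lin_tac.
by apply: eq_sw => k1 k2; apply: eq_sw => g1 g2; rewrite !mulrA.
Qed.

Lemma cocycle_map_mul (U : lmodType K) (f : A -> H -> U) : lin2 f -> forall a h c g,
  sw (DH h) (fun h1 h2 => sw (DA c) (fun c1 c2 =>
    sw (cocycle_map (a * rt' h1 c1) (lt h2 c2 * g)) f))
  = sw (cocycle_map a h) (fun x y => sw (cocycle_map c g) (fun x' y' =>
      sw (DH y) (fun y1 y2 => sw (DA x') (fun x1' x2' => f (x * rt y1 x1') (lt y2 x2' * y'))))).
Proof. by move=> lf a h c g; rewrite cocycle_map_mul_lhs // cocycle_map_mul_rhs. Qed.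

Lemma cocycle_map_bicrossed_iso : bicrossed_iso sA sH lt rt' lt rt.
Proof.
exists cocycle_map; split; first exact: cocycle_map_tensor.
split.
  by exists cocycle_map_inv; split; [exact: cocycle_map_inv_tensor | exact: cocycle_mapK].
split; first by move=> U f lf; split; [exact: cocycle_map_unit | exact: cocycle_map_mul].
split; first exact: cocycle_map_coalg.
split; first exact: cocycle_map_cou.
by split; [exact: cocycle_map_lmod | exact: cocycle_map_comod].
Qed.

End CocycleToIso.

Lemma deformation_bicrossed_iso (K : fieldType) (A H : algType K)
    (sA : hopf_str A) (sH : hopf_str H) (lt : H -> A -> H) (rt rt' : H -> A -> A)
    (u : H -> A) :
  is_hopf sA -> is_hopf sH -> matched_pair sA sH lt rt ->
  coalg_lazy_cocycle sA sH u -> cocycle_deformation sA sH lt rt rt' u ->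
  bicrossed_iso sA sH lt rt' lt rt.
Proof.
move=> hA hH mp [u_lin [u_cop [u_cou [u1 u_lazy]]]] [rt'E [u_cocycle lt_u]].
by apply: cocycle_map_bicrossed_iso.
Qed.

Theorem corollary3p7 (K : fieldType) (A H : algType K)
  (sA : hopf_str A) (sH : hopf_str H)
  (lt lt' : H -> A -> H) (rt rt' : H -> A -> A) :
  is_hopf sA -> is_hopf sH ->
  matched_pair sA sH lt rt -> matched_pair sA sH lt' rt' ->
  (bicrossed_iso sA sH lt rt lt' rt' <->
   (lt' = lt /\
    exists u : H -> A, coalg_lazy_cocycle sA sH u /\
      (forall h c, rt' h c =
         sw (cop sH h) (fun h1 h' => sw (cop sH h') (fun h2 h3 =>
           sw (cop sA c) (fun c1 c2 =>
             u h1 * rt h2 c1 * antip sA (u (lt h3 c2)))))) /\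
      (forall h g,
         sw (cop sH h) (fun h1 h' => sw (cop sH h') (fun h2 h3 =>
           sw (cop sH g) (fun g1 g2 =>
             u h1 * rt h2 (u g1) * antip sA (u (h3 * g2)))))
         = (cou sH g * cou sH h) *: 1) /\
      (forall h g, lt h (u g) = cou sH g *: h))).
Proof.
move=> hA hH mp mp'; split.
  move/(bicrossed_iso_sym hA hH (mp_lt_lin mp') (mp_rt_lin mp')).
  exact: bicrossed_iso_deformation.
case=> lt'E [u [u_cocycle u_deformation]]; subst lt'.
apply: bicrossed_iso_sym (mp_lt_lin mp) (mp_rt_lin mp) _ => //.
exact: deformation_bicrossed_iso mp u_cocycle u_deformation.
Qed.
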